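(* Let $V$ be a finite set with $K = |V| \geq 1$ elements, let $\epsilon \geq 0$, and let $f : 2^V \to \mathbb{R}_{\geq 0}$. Then the $\epsilon$-pruning $\tilde f$ of $f$ is $\epsilon$-close to $f$; that is, for all $T, U \subseteq V$ with $|T| \leq 1$, $$(1-\epsilon)\, f[T,U] \;\leq\; \tilde f[T,U] \;\leq\; f[T,U].$$
   Context: For $g : 2^V \to \mathbb{R}_{\geq 0}$ and $T, U \subseteq V$, the interval sum is $g[T,U] := \sum_{S:\, T \subseteq S \subseteq U} g(S)$ (an empty sum, equal to $0$, if $T \not\subseteq U$). A function $\tilde f : 2^V \to \mathbb{R}_{\geq 0}$ is called $\epsilon$-close to $f$ if $(1-\epsilon) f[T,U] \leq \tilde f[T,U] \leq f[T,U]$ for all $T,U \subseteq V$ with $|T| \leq 1$. For $j \in S \subseteq V$ define $$\psi(j,S) = \sum_{R:\, j \in R \subseteq S} f(R)\,\bigl(1 + 1/K\bigr)^{|R|-K}\, K^{|R|-|S|}.$$ The $\epsilon$-pruning of $f$ is the function $\tilde f : 2^V \to \mathbb{R}_{\geq 0}$ given by $\tilde f(S) = 0$ if $S \neq \emptyset$ and $f(S) < \epsilon \cdot \psi(j,S)$ for every $j \in S$, and $\tilde f(S) = f(S)$ otherwise (in particular $\tilde f(\emptyset) = f(\emptyset)$). *)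

From mathcomp Require Import all_boot all_order all_algebra.
Set Implicit Arguments. Unset Strict Implicit. Unset Printing Implicit Defensive.
Import Order.TTheory GRing.Theory Num.Theory.
Local Open Scope ring_scope.

Section Defs.
Variables (R : realFieldType) (V : finType).

(* interval sum g[T,U] = sum over S with T ⊆ S ⊆ U of g S (0 if T ⊄ U) *)
Definition isum (g : {set V} -> R) (T U : {set V}) : R :=
  \sum_(S : {set V} | (T \subset S) && (S \subset U)) g S.

Definition eps_close (eps : R) (f ft : {set V} -> R) : Prop :=
  forall T U : {set V}, (#|T| <= 1)%N ->
    (1 - eps) * isum f T U <= isum ft T U /\ isum ft T U <= isum f T U.

Definition psi (f : {set V} -> R) (j : V) (S : {set V}) : R :=
  let K := #|V| in
  \sum_(Rs : {set V} | (j \in Rs) && (Rs \subset S))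
     f Rs * (1 + (K%:R)^-1) ^ (#|Rs|%:Z - K%:Z) * (K%:R) ^ (#|Rs|%:Z - #|S|%:Z).

Definition pruning (eps : R) (f : {set V} -> R) : {set V} -> R :=
  fun S => if (S != set0) && [forall j in S, f S < eps * psi f j S] then 0 else f S.
End Defs.

From mathcomp Require Import all_boot all_order all_algebra.
Set Implicit Arguments. Unset Strict Implicit. Unset Printing Implicit Defensive.
Import Order.TTheory GRing.Theory Num.Theory.
Local Open Scope ring_scope.

(* Extend psi to Psi(T, S) = sum_(T <= R <= S) f(R) b^(|R| - K) K^(|R| - |S|) with
   b = 1 + 1/K, so that psi(j, S) = Psi({j}, S).  Summing K^(|R| - |S|) over
   R <= S <= U gives b^(|U| - |R|), so f(R) reappears with weight b^(|U| - K) <= 1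
   and sum_(T <= S <= U) Psi(T, S) <= f[T, U].
   Pruning S >= T loses f(S) <= eps Psi(T, S): for T = {t} this is the pruning
   condition at t, and for T empty it follows by averaging the condition over
   j in S, since sum_(j in S) Psi({j}, S) <= |S| Psi(empty, S).  Summing over S,
   f[T, U] - f~[T, U] <= eps f[T, U]. *)

Lemma exprz_natB (R : unitRingType) (x : R) (m n : nat) : (m <= n)%N ->
  x ^ (m%:Z - n%:Z) = x^-1 ^+ (n - m).
Proof. by move=> le_mn; rewrite -opprB subzn // -exprnN exprVn. Qed.

Section SubsetSums.
Variables (R : comNzRingType) (V : finType).

Lemma sum_subset_expr (q : R) (W : {set V}) :
  \sum_(A : {set V} | A \subset W) q ^+ #|A| = (1 + q) ^+ #|W|.
Proof.
rewrite -prodr_const big_mkcond /= [RHS]big_mkcond /=.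
rewrite (eq_bigr (fun i => (if i \in W then q else 0) + 1)); last first.
  by move=> i _; case: (i \in W); rewrite ?add0r // addrC.
rewrite bigA_distr; apply: eq_bigr => A _.
rewrite -big_mkcond /=; case: (boolP (A \subset W)) => [sAW | /subsetPn[i iA niW]].
  by rewrite -prodr_const; apply: eq_bigr => i iA; rewrite (subsetP sAW).
by rewrite (bigD1 i) //= (negbTE niW) mul0r.
Qed.

Lemma sum_interval_expr (q : R) (A U : {set V}) : A \subset U ->
  \sum_(S : {set V} | (A \subset S) && (S \subset U)) q ^+ (#|S| - #|A|)
    = (1 + q) ^+ (#|U| - #|A|).
Proof.
move=> sAU; rewrite -[in RHS](setIidPr sAU) -cardsD -sum_subset_expr.
rewrite (reindex_onto (fun B => A :|: B) (fun S => S :\: A)); last first.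
  by move=> S /andP[sAS _]; rewrite setDE setUIr setUCr setIT (setUidPr sAS).
apply: eq_big => B.
  rewrite subsetUl /= subUset sAU /= setDUl setDv set0U subsetD.
  by apply/andP/andP => -[sBU dBA]; split=> //; [apply/setDidPl/eqP | apply/eqP/setDidPl].
case/andP=> _ /eqP defB; rewrite cardsU -defB setIDA (setIidPl (subsetUl A B)) setDv.
by rewrite cards0 subn0 addKn.
Qed.

End SubsetSums.

Section Pruning.
Variables (R : realFieldType) (V : finType) (f : {set V} -> R).
Hypothesis f_ge0 : forall S, 0 <= f S.

Definition psi_term (Rs S : {set V}) : R :=
  f Rs * (1 + (#|V|%:R)^-1) ^ (#|Rs|%:Z - #|V|%:Z) * (#|V|%:R) ^ (#|Rs|%:Z - #|S|%:Z).

Definition psi_set (T S : {set V}) : R :=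
  \sum_(Rs : {set V} | (T \subset Rs) && (Rs \subset S)) psi_term Rs S.

Lemma psi_psi_set (j : V) (S : {set V}) : psi f j S = psi_set [set j] S.
Proof. by apply: eq_bigl => Rs; rewrite sub1set. Qed.

Lemma psi_term_ge0 (Rs S : {set V}) : 0 <= psi_term Rs S.
Proof. by rewrite !mulr_ge0 ?exprz_ge0 ?addr_ge0 ?invr_ge0 ?ler0n. Qed.

Lemma psi_set_ge0 (T S : {set V}) : 0 <= psi_set T S.
Proof. by apply: sumr_ge0 => Rs _; apply: psi_term_ge0. Qed.

Lemma sum_psi_set_le_isum (T U : {set V}) :
  \sum_(S : {set V} | (T \subset S) && (S \subset U)) psi_set T S <= isum f T U.
Proof.
have b_ge1 : 1 <= 1 + (#|V|%:R)^-1 :> R by rewrite lerDl invr_ge0 ler0n.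
have b_gt0 : 0 < 1 + (#|V|%:R)^-1 :> R by apply: lt_le_trans b_ge1.
rewrite /psi_set /isum.
rewrite (exchange_big_dep (fun Rs : {set V} => (T \subset Rs) && (Rs \subset U))) /=;
  last by move=> S Rs /andP[_ sSU] /andP[-> sRS]; rewrite (subset_trans sRS sSU).
apply: ler_sum => Rs /andP[sTR sRU].
rewrite (eq_bigl (fun S : {set V} => (Rs \subset S) && (S \subset U))); last first.
  move=> S; apply/andP/andP => [[/andP[_ ->] /andP[_ ->]] // | [sRS ->]].
  by rewrite (subset_trans sTR sRS) sTR sRS.
rewrite /psi_term -mulr_sumr.
under eq_bigr => S /andP[sRS _] do rewrite exprz_natB ?subset_leq_card //.
rewrite sum_interval_expr // -mulrA ler_piMr // exprnP -expfzDr ?gt_eqF //.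
have le_RU := subset_leq_card sRU; have le_UV := max_card (mem U).
rewrite -subzn // (addrC (_ - _)%R) subrKA exprz_natB //.
by rewrite exprn_ile1 // ?invr_ge0 ?(ltW b_gt0) // invf_le1.
Qed.

Lemma sum_psi_set1_le (S : {set V}) :
  \sum_(j in S) psi_set [set j] S <= #|S|%:R * psi_set set0 S.
Proof.
rewrite /psi_set (exchange_big_dep (fun Rs : {set V} => Rs \subset S)) /=;
  last by move=> j Rs _ /andP[].
rewrite [X in _ <= _ * X](eq_bigl (fun Rs : {set V} => Rs \subset S)) => [|Rs];
  last by rewrite sub0set.
rewrite mulr_sumr; apply: ler_sum => Rs sRS.
rewrite (eq_bigl (mem Rs)) => [|j]; last first.
  by rewrite sub1set sRS andbT; apply/andP/idP => [[] | jR] //; rewrite (subsetP sRS).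
rewrite sumr_const -[_ *+ #|Rs|]mulr_natl.
by apply: ler_wpM2r; rewrite ?psi_term_ge0 ?ler_nat ?subset_leq_card.
Qed.

Lemma pruning_le (eps : R) (S : {set V}) : pruning eps f S <= f S.
Proof. by rewrite /pruning; case: ifP. Qed.

Lemma pruning_loss_le (eps : R) (T S : {set V}) : 0 <= eps -> (#|T| <= 1)%N ->
  T \subset S -> f S - pruning eps f S <= eps * psi_set T S.
Proof.
move=> eps_ge0 T_le1 sTS; rewrite /pruning.
case: ifP => [/andP[S_neq0 /forallP f_lt] | _]; last by rewrite subrr mulr_ge0 ?psi_set_ge0.
have f_le j : j \in S -> f S <= eps * psi_set [set j] S.
  by move=> jS; rewrite -psi_psi_set; have := f_lt j; rewrite jS => /ltW.
rewrite subr0; move: T_le1 sTS; rewrite leq_eqVlt ltnS leqn0.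
case/orP=> [/cards1P[t ->] | /eqP/cards0_eq -> _]; first by rewrite sub1set; apply: f_le.
have S_gt0 : 0 < #|S|%:R :> R by rewrite ltr0n card_gt0.
rewrite -(ler_pM2l S_gt0) mulrCA (le_trans _ (ler_wpM2l eps_ge0 (sum_psi_set1_le S))) //.
by rewrite mulr_sumr mulr_natl -sumr_const; apply: ler_sum.
Qed.

End Pruning.

Theorem theorem1 (R : realFieldType) (V : finType) (hV : (1 <= #|V|)%N)
  (eps : R) (heps : 0 <= eps) (f : {set V} -> R) (hf : forall S, 0 <= f S) :
  eps_close eps f (pruning eps f).
Proof.
move=> T U T_le1; split; last by apply: ler_sum => S _; apply: pruning_le.
have loss : isum f T U - isum (pruning eps f) T U <= eps * isum f T U.
  rewrite /isum -sumrB (le_trans _ (ler_wpM2l heps (sum_psi_set_le_isum hf T U))) //.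
  by rewrite mulr_sumr; apply: ler_sum => S /andP[sTS _]; apply: pruning_loss_le.
by rewrite mulrBl mul1r lerBlDr addrC -lerBlDr.
Qed.
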